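(* Let $G$ be a cactus graph with $n>2$ vertices and $b$ bridges, and let $d=\deg(G)$ be its degree sequence. Then $b\ge \beta$, where $\beta=\max\{\mu_1,\tfrac12(\mu_1+\mu_{odd})\}$.
   Context: A cactus graph is a connected simple graph in which every edge belongs to at most one cycle. A bridge is an edge whose removal disconnects the graph. For a degree sequence $d$, $\mu_1$ denotes the number of entries equal to $1$, and $\mu_{odd}$ denotes the number of entries that are odd integers greater than $1$. *)

From mathcomp Require Import all_boot all_order all_algebra.
Set Implicit Arguments. Unset Strict Implicit. Unset Printing Implicit Defensive.

Section Graphs.
Variable T : finType.

Definition simple_graph (e : rel T) : Prop := symmetric e /\ irreflexive e.

Definition connected_graph (e : rel T) : bool :=
  [forall x, forall y, connect e x y].

Definition edges (e : rel T) : {set {set T}} :=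
  [set E : {set T} | [exists x, exists y, e x y && (E == [set x; y])]].

Definition is_cycle_seq (e : rel T) (s : seq T) : bool :=
  [&& uniq s, 3 <= size s & cycle e s].

Definition cycle_edges (s : seq T) : {set {set T}} :=
  [set [set x; next s x] | x in s].

Definition cactus (e : rel T) : Prop :=
  simple_graph e /\ connected_graph e /\
  forall (E : {set T}) (s1 s2 : seq T),
    is_cycle_seq e s1 -> is_cycle_seq e s2 ->
    E \in cycle_edges s1 -> E \in cycle_edges s2 ->
    cycle_edges s1 = cycle_edges s2.

Definition remove_edge (e : rel T) (E : {set T}) : rel T :=
  fun x y => e x y && ([set x; y] != E).

Definition bridges (e : rel T) : {set {set T}} :=
  [set E in edges e | ~~ connected_graph (remove_edge e E)].

Definition deg (e : rel T) (v : T) : nat := #|[set u | e v u]|.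

Definition mu1 (e : rel T) : nat := #|[set v | deg e v == 1]|.
Definition muodd (e : rel T) : nat :=
  #|[set v | odd (deg e v) && (1 < deg e v)]|.

End Graphs.

From mathcomp Require Import all_boot all_order all_algebra.
From mathcomp Require Import zify.
Import Order.TTheory GRing.Theory Num.Theory.

(* A pendant edge is a bridge, and when n > 2 two leaves cannot share their
   pendant edge (they would form a whole component), so mu_1 <= b.  In a
   cactus every vertex v of odd degree lies on a bridge: otherwise each edge
   at v lies on a cycle, which is unique and leaves v through exactly one
   other edge, so the edges at v come in pairs and deg v is even.  Hence the
   mu_1 + mu_odd vertices of odd degree are among the at most 2b endpoints
   of bridges. *)

Set Implicit Arguments.
Unset Strict Implicit.
Unset Printing Implicit Defensive.

Lemma pairing_even_card (T : finType) (R : T -> T -> Prop) (A : {set T}) :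
  (forall x y, R x y -> R y x) ->
  (forall x, x \in A -> exists y, [/\ y \in A, y != x & R x y]) ->
  (forall x y z, x \in A -> y \in A -> z \in A -> R x y -> R x z -> y = z) ->
  ~~ odd #|A|.
Proof.
move=> Rsym.
have [n] := ubnP #|A|; elim: n A => // n IH A ltA partner uniq_partner.
have [->|[x xA]] := set_0Vmem A; first by rewrite cards0.
have [y [yA yx Rxy]] := partner x xA.
have cardA : #|A| = (#|A :\ x :\ y|).+2.
  by rewrite (cardsD1 x A) xA (cardsD1 y (A :\ x)) !inE yx yA.
rewrite cardA /= negbK; apply: IH; first by move: ltA; rewrite cardA; lia.
- move=> z; rewrite !inE => /and3P [zy zx zA].
  have [w [wA wz Rzw]] := partner z zA.
  exists w; split => //; rewrite !inE wA andbT.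
  apply/andP; split.
  + apply/eqP => wy; subst w.
    by case/eqP: zx; apply: (uniq_partner y) => //; apply: Rsym.
  + apply/eqP => wx; subst w.
    by case/eqP: zy; apply: (uniq_partner x) => //; apply: Rsym.
- move=> a b c; rewrite !inE => /and3P [_ _ aA] /and3P [_ _ bA] /and3P [_ _ cA].
  exact: uniq_partner.
Qed.

Lemma next_last (T : eqType) (x : T) (p : seq T) :
  uniq (x :: p) -> next (x :: p) (last x p) = x.
Proof. by move=> up; rewrite next_nth mem_last index_last // nth_default. Qed.

Lemma next_neq_prev (T : eqType) (s : seq T) v :
  uniq s -> 2 < size s -> v \in s -> next s v != prev s v.
Proof.
move=> us ss vs; case: (rot_to vs) => i s' Ers.
have us' : uniq (v :: s') by rewrite -Ers rot_uniq.
have ss' : 2 < size (v :: s') by rewrite -Ers size_rot.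
rewrite -(next_rot i us) -(prev_rot i us) Ers; apply/eqP => next_prev_v.
have := next_prev us' v; rewrite -next_prev_v.
move: us' ss'; case: s' {Ers next_prev_v} => [|a [|b r]] //= /andP [].
rewrite !inE negb_or => /andP [va vbr] _ _.
by rewrite !eqxx eq_sym (negbTE va) => bv; rewrite bv eqxx in vbr.
Qed.

Lemma card_cover_leq (T : finType) (P : {set {set T}}) k :
  {in P, forall A : {set T}, #|A| <= k} -> #|cover P| <= k * #|P|.
Proof.
move=> Pk; rewrite (leq_trans (leq_card_cover P)) // mulnC -sum_nat_const.
exact: leq_sum.
Qed.

Section Bridges.
Variables (T : finType) (e : rel T).

Lemma connected_graphP (f : rel T) :
  reflect (forall x y, connect f x y) (connected_graph f).
Proof.
apply: (iffP forallP) => [conn x y | conn x]; first exact: (forallP (conn x)).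
by apply/forallP => y; apply: conn.
Qed.

Lemma edges_edge x y : e x y -> [set x; y] \in edges e.
Proof.
by move=> exy; rewrite inE; apply/existsP; exists x; apply/existsP; exists y;
  rewrite exy eqxx.
Qed.

Lemma card_edges E : E \in edges e -> #|E| <= 2.
Proof.
rewrite inE => /existsP [x /existsP [y /andP [_ /eqP ->]]].
by rewrite cards2 ltnS leq_b1.
Qed.

Lemma cycle_edges_next_prev (s : seq T) v u :
  uniq s -> v != u -> [set v; u] \in cycle_edges s ->
  u = next s v \/ u = prev s v.
Proof.
move=> us vu /imsetP [x xs E].
have : v \in [set x; next s x] by rewrite -E !inE eqxx.
have : u \in [set x; next s x] by rewrite -E !inE eqxx orbT.
rewrite !inE => /orP [/eqP ux | /eqP un] /orP [/eqP vx | /eqP vn].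
- by rewrite vx ux eqxx in vu.
- by right; rewrite vn prev_next // ux.
- by left; rewrite un vx.
- by rewrite vn un eqxx in vu.
Qed.

(* Junk value [v] when [v] is isolated. *)
Definition nbr v := odflt v [pick u | e v u].

Lemma leaf_nbr v : deg e v = 1 -> e v (nbr v).
Proof.
rewrite /nbr; case: pickP => [u //|no_nbr] /= /eqP.
rewrite /deg; suff -> : [set u | e v u] = set0 by rewrite cards0.
by apply/setP => u; rewrite !inE no_nbr.
Qed.

Lemma leaf_nbr_eq v u : deg e v = 1 -> e v u -> u = nbr v.
Proof.
move=> /[dup] /eqP/cards1P [x Ex] /leaf_nbr evn evu.
have : u \in [set x] by rewrite -Ex inE.
have : nbr v \in [set x] by rewrite -Ex inE.
by rewrite !inE => /eqP -> /eqP ->.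
Qed.

Lemma leaf_edge_bridge v :
  1 < #|T| -> deg e v = 1 -> [set v; nbr v] \in bridges e.
Proof.
move=> T1 dv; rewrite inE edges_edge ?leaf_nbr //=.
have [w wv] : exists w, w != v.
  apply/existsP; apply: contraTT T1 => /existsPn all_v.
  rewrite -leqNgt -(cards1 v) subset_leq_card //.
  by apply/subsetP => x _; rewrite inE; apply: negbNE (all_v x).
apply/negP => /connected_graphP/(_ v w)/connectP [[|z p] /= pz wl].
  by rewrite wl eqxx in wv.
by case/andP: pz => /andP [evz]; rewrite -(leaf_nbr_eq dv evz) eqxx.
Qed.

Lemma adjacent_leaves v w :
  symmetric e -> connected_graph e ->
  deg e v = 1 -> deg e w = 1 -> e v w -> #|T| <= 2.
Proof.
move=> esym conn dv dw evw.
have ewv : e w v by rewrite esym.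
have vw_closed : closed e [set v; w].
  suff stay x y : e x y -> x \in [set v; w] -> y \in [set v; w].
    by move=> x y exy; apply/idP/idP; apply: stay; rewrite // esym.
  move=> exy; rewrite !inE => /orP [] /eqP xE; rewrite xE in exy.
  - by rewrite (leaf_nbr_eq dv exy) -(leaf_nbr_eq dv evw) eqxx orbT.
  - by rewrite (leaf_nbr_eq dw exy) -(leaf_nbr_eq dw ewv) eqxx.
rewrite (leq_trans _ (card_edges (edges_edge evw))) // subset_leq_card //.
apply/subsetP => x _.
by rewrite -(closed_connect vw_closed (connected_graphP _ conn v x)) !inE eqxx.
Qed.

Lemma mu1_leq_bridges :
  symmetric e -> connected_graph e -> 2 < #|T| -> mu1 e <= #|bridges e|.
Proof.
move=> esym conn T2.
have leaf_edge_inj :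
    {in [set v | deg e v == 1] &, injective (fun v => [set v; nbr v])}.
  move=> v w; rewrite !inE => /eqP dv /eqP dw vw_edge.
  apply/eqP/negPn/negP => vw.
  have : v \in [set w; nbr w] by rewrite -vw_edge !inE eqxx.
  rewrite !inE (negbTE vw) => /eqP vE.
  have := adjacent_leaves esym conn dw dv; rewrite vE leaf_nbr // => /(_ isT).
  by rewrite leqNgt T2.
rewrite /mu1 -(card_in_imset leaf_edge_inj) subset_leq_card //.
apply/subsetP => E /imsetP [v]; rewrite inE => /eqP dv ->.
by apply: leaf_edge_bridge; rewrite // ltnW.
Qed.

Lemma nonbridge_on_cycle v u :
  irreflexive e -> e v u -> [set v; u] \notin bridges e ->
  exists s, [/\ is_cycle_seq e s, v \in s & next s v = u].
Proof.
move=> eirr evu nb.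
have sub_e : subrel (remove_edge e [set v; u]) e by move=> x y /andP [].
have : connected_graph (remove_edge e [set v; u]).
  by move: nb; rewrite inE edges_edge //= negbK.
move/connected_graphP/(_ u v)/connectP => [p0 /shortenP [p path_p uniq_p _] vE].
subst v.
exists (u :: p); split; rewrite ?mem_last ?next_last //.
apply/and3P; split => //; last first.
  by rewrite /cycle rcons_path (sub_path sub_e path_p).
case: p {uniq_p sub_e nb} path_p evu => [|w [|w' p]] //=; first by rewrite eirr.
by rewrite /remove_edge setUC eqxx !andbF.
Qed.

Definition cycle_mates v u w : Prop :=
  u != w /\ exists s, [/\ is_cycle_seq e s, [set v; u] \in cycle_edges s
                                       & [set v; w] \in cycle_edges s].

Lemma cycle_mates_sym v u w : cycle_mates v u w -> cycle_mates v w u.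
Proof. by case=> uw [s [s_cyc vu vw]]; split; [rewrite eq_sym | exists s]. Qed.

Lemma cycle_mates_exist v u :
  simple_graph e -> e v u -> [set v; u] \notin bridges e ->
  exists w, [/\ e v w, w != u & cycle_mates v u w].
Proof.
move=> [esym eirr] evu nb.
have [s [s_cyc vs next_v]] := nonbridge_on_cycle eirr evu nb.
have /and3P [uniq_s size_s cyc_s] := s_cyc.
have u_neq_prev : u != prev s v by rewrite -next_v next_neq_prev.
exists (prev s v); split; rewrite 1?eq_sym //; first by rewrite esym prev_cycle.
split=> //; exists s; split=> //.
  by rewrite -next_v; apply/imsetP; exists v.
by apply/imsetP; exists (prev s v); rewrite ?mem_prev // next_prev // setUC.
Qed.

Lemma cycle_mates_uniq v u w w' :
  cactus e -> e v u -> e v w -> e v w' ->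
  cycle_mates v u w -> cycle_mates v u w' -> w = w'.
Proof.
move=> [[_ eirr] [_ cac]] evu evw evw'.
move=> [uw [s [s_cyc vu_s vw_s]]] [uw' [s' [s'_cyc vu_s' vw'_s']]].
rewrite -(cac _ _ _ s_cyc s'_cyc vu_s vu_s') in vw'_s'.
have /and3P [uniq_s _ _] := s_cyc.
have ne x : e v x -> v != x by apply: contraTneq => <-; rewrite eirr.
move: uw uw'.
case: (cycle_edges_next_prev uniq_s (ne _ evu) vu_s) => ->;
case: (cycle_edges_next_prev uniq_s (ne _ evw) vw_s) => ->;
by case: (cycle_edges_next_prev uniq_s (ne _ evw') vw'_s') => ->; rewrite ?eqxx.
Qed.

Lemma odd_deg_bridge v : cactus e -> odd (deg e v) -> v \in cover (bridges e).
Proof.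
move=> cac; apply: contraLR => v_no_bridge.
have nb u : e v u -> [set v; u] \notin bridges e.
  move=> _; apply: contra v_no_bridge => vu_bridge.
  by apply/bigcupP; exists [set v; u]; rewrite ?set21.
have [simple_e _] := cac.
apply: (@pairing_even_card _ (cycle_mates v)); first exact: cycle_mates_sym.
- move=> u; rewrite inE => evu.
  have [w [evw wu mates]] := cycle_mates_exist simple_e evu (nb u evu).
  by exists w; rewrite inE.
- by move=> u w w'; rewrite !inE => evu evw evw'; apply: cycle_mates_uniq.
Qed.

Lemma odd_deg_card : #|[set v | odd (deg e v)]| = mu1 e + muodd e.
Proof.
rewrite -(cardsID [set v | deg e v == 1]) /mu1 /muodd.
congr (_ + _); apply/eq_card => v; rewrite !inE.
all: by case: (deg e v) => [|[|d]] //; case: odd.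
Qed.

Lemma mu1_muodd_leq_bridges : cactus e -> mu1 e + muodd e <= 2 * #|bridges e|.
Proof.
move=> cac; rewrite -odd_deg_card.
apply: leq_trans (card_cover_leq _) => [|E]; last first.
  by rewrite inE => /andP [/card_edges].
by apply/subset_leq_card/subsetP => v; rewrite inE; apply: odd_deg_bridge.
Qed.
End Bridges.

Theorem lemma4p4 (T : finType) (e : rel T) :
  cactus e -> 2 < #|T| ->
  (Num.max ((mu1 e)%:R : rat) (((mu1 e + muodd e)%:R : rat) / 2%:R)
     <= (#|bridges e|)%:R)%R.
Proof.
move=> cac T2; have [[esym _] [conn _]] := cac.
rewrite ge_max ler_nat mu1_leq_bridges //=.
by rewrite ler_pdivrMr ?ltr0n // -natrM ler_nat mulnC mu1_muodd_leq_bridges.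
Qed.
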